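(* There is an absolute constant $c>0$ such that for every $n\ge 1$ and every algorithm $M$ for uniform facility location that outputs the set of chosen facilities and is $1$-differentially private with respect to the demand set, there exists an instance (a metric space $(V,d)$ on $n$ points, a facility cost $f>0$, and a demand set $D\subseteq V$) on which $\mathbb{E}[\mathrm{cost}(M)]\ge c\sqrt n\cdot\mathrm{OPT}$.
   Context: Uniform facility location: given a metric $(V,d)$, a uniform facility opening cost $f$, and a private demand set $D\subseteq V$, a solution is a nonempty set $F\subseteq V$ of facilities with cost $\sum_{v\in D}\min_{u\in F}d(v,u)+f\,|F|$; $\mathrm{OPT}$ is the minimum cost. $M$ is $1$-differentially private if, for fixed $(V,d,f)$, for all demand sets $D,D'$ with symmetric difference one and all sets $\mathcal{O}$ of outputs, $\Pr[M(D)\in\mathcal{O}]\le e\cdot\Pr[M(D')\in\mathcal{O}]$. *)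

From HB Require Import structures.
From mathcomp Require Import all_boot all_order all_algebra.
From mathcomp Require Import reals Rstruct.
From Stdlib Require Rtrigo_def.
Set Implicit Arguments. Unset Strict Implicit. Unset Printing Implicit Defensive.
Import Order.TTheory GRing.Theory Num.Theory.
Local Open Scope ring_scope.

Notation R := Rdefinitions.R.

Definition is_metric (n : nat) (d : 'I_n -> 'I_n -> R) : Prop :=
  (forall x y, 0 <= d x y) /\
  (forall x y, d x y = 0 <-> x = y) /\
  (forall x y, d x y = d y x) /\
  (forall x y z, d x z <= d x y + d y z).

(* min_{u in F} d v u  (only meaningful for F nonempty; 0 for F empty). *)
Definition conn (n : nat) (d : 'I_n -> 'I_n -> R) (v : 'I_n) (F : {set 'I_n}) : R :=
  match [pick u in F] with
  | Some u0 => \big[Num.min/d v u0]_(u in F) d v u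
  | None => 0
  end.

Definition fl_cost (n : nat) (d : 'I_n -> 'I_n -> R) (f : R)
    (D F : {set 'I_n}) : R :=
  \sum_(v in D) conn d v F + f * (#|F|%:R).

(* OPT = min over nonempty F of cost(F)  (setT is nonempty when n >= 1). *)
Definition fl_opt (n : nat) (d : 'I_n -> 'I_n -> R) (f : R) (D : {set 'I_n}) : R :=
  \big[Num.min/fl_cost d f D setT]_(F : {set 'I_n} | F != set0) fl_cost d f D F.

Definition is_distr (n : nat) (mu : {set 'I_n} -> R) : Prop :=
  (forall F, 0 <= mu F) /\ \sum_(F : {set 'I_n}) mu F = 1.

Definition prob (n : nat) (mu : {set 'I_n} -> R) (O : {set {set 'I_n}}) : R :=
  \sum_(F in O) mu F.

(* A mechanism: for each instance (d, f) and demand set D, the distribution of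
   the output facility set M d f D. *)
Definition mechanism (n : nat) :=
  ('I_n -> 'I_n -> R) -> R -> {set 'I_n} -> {set 'I_n} -> R.

(* M is a valid (randomized) algorithm: outputs a nonempty facility set. *)
Definition valid_mech (n : nat) (M : mechanism n) : Prop :=
  forall d f D, is_metric d -> 0 < f ->
    is_distr (M d f D) /\ M d f D set0 = 0.

Definition dp1 (n : nat) (M : mechanism n) : Prop :=
  forall d f, is_metric d -> 0 < f ->
    forall D D' : {set 'I_n}, #|(D :\: D') :|: (D' :\: D)| = 1%N ->
      forall O : {set {set 'I_n}},
        prob (M d f D) O <= Rtrigo_def.exp 1 * prob (M d f D') O.

Definition expected_cost (n : nat) (M : mechanism n) d f D : R :=
  \sum_(F : {set 'I_n}) M d f D F * fl_cost d f D F.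

From HB Require Import structures.
From mathcomp Require Import all_boot all_order all_algebra.
From mathcomp Require Import reals Rstruct lra.
From Stdlib Require Rtrigo_def Rpower Exp_prop.
Set Implicit Arguments. Unset Strict Implicit. Unset Printing Implicit Defensive.
Import Order.TTheory GRing.Theory Num.Theory.
Local Open Scope ring_scope.

(* Take f = 1 and all distances between distinct points equal to n, so that
   OPT <= 1 whenever at most one client is present.  Let p_v be the
   probability that v is opened on the empty demand set.  If p_v > 1/6 for
   every v, the expected opening cost on the empty instance is already
   n/6.  Otherwise some v has p_v <= 1/6; by privacy v is still opened with
   probability at most e/6 <= 1/2 on the demand set {v}, and whenever it is
   not opened the client v pays n.  Either way the expected cost is at least
   n/6 >= sqrt n / 6 * OPT. *)

Definition discrete_metric (n : nat) (r : R) (x y : 'I_n) : R :=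
  if x == y then 0 else r.

Lemma discrete_metric_is_metric n (r : R) :
  0 < r -> is_metric (@discrete_metric n r).
Proof.
rewrite /is_metric /discrete_metric => r_gt0; split; [|split; [|split]].
- by move=> x y; case: eqP => // _; apply: ltW.
- move=> x y; case: eqP => // xy; split=> [r_eq0|/xy //].
  by move: r_gt0; rewrite r_eq0 ltxx.
- by move=> x y; rewrite eq_sym.
- move=> x y z; case: (eqVneq x z) => [<-|xz].
    by case: eqP => _; case: eqP => _; lra.
  case: (eqVneq x y) => [<-|_]; first by rewrite (negbTE xz); lra.
  by case: eqP => _; lra.
Qed.

Section Connection.
Variables (n : nat) (d : 'I_n -> 'I_n -> R).

Lemma conn_le_dist (v u : 'I_n) (F : {set 'I_n}) : u \in F -> conn d v F <= d v u.
Proof.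
move=> uF; rewrite /conn; case: pickP => [u0 _|]; last by move/(_ u); rewrite uF.
by rewrite (bigD1 u) //= ge_min lexx.
Qed.

Lemma conn_ge (v : 'I_n) (F : {set 'I_n}) (a : R) :
  F != set0 -> (forall u, u \in F -> a <= d v u) -> a <= conn d v F.
Proof.
case/set0Pn=> u0 u0F le_a; rewrite /conn; case: pickP => [u1 u1F|]; last first.
  by move/(_ u0); rewrite u0F.
elim/big_rec: _ => [|u y uF le_ay]; first exact: le_a.
by rewrite le_min le_ay andbT le_a.
Qed.

Hypothesis d_ge0 : forall x y, 0 <= d x y.

Lemma conn_ge0 (v : 'I_n) (F : {set 'I_n}) : 0 <= conn d v F.
Proof.
have [->|F0] := eqVneq F set0; last by apply: conn_ge.
by rewrite /conn; case: pickP => [u|//]; rewrite inE.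
Qed.

Lemma fl_cost_ge0 (f : R) (D F : {set 'I_n}) : 0 <= f -> 0 <= fl_cost d f D F.
Proof.
move=> f_ge0; apply: addr_ge0; first by apply: sumr_ge0 => v _; apply: conn_ge0.
exact: mulr_ge0.
Qed.

End Connection.

Lemma fl_cost_set0 n (d : 'I_n -> 'I_n -> R) f (F : {set 'I_n}) :
  fl_cost d f set0 F = f * #|F|%:R.
Proof. by rewrite /fl_cost big_set0 add0r. Qed.

Lemma fl_cost_set1 n (d : 'I_n -> 'I_n -> R) f (v : 'I_n) (F : {set 'I_n}) :
  fl_cost d f [set v] F = conn d v F + f * #|F|%:R.
Proof. by rewrite /fl_cost big_set1. Qed.

Lemma fl_opt_le_cost n (d : 'I_n -> 'I_n -> R) f (D F : {set 'I_n}) :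
  F != set0 -> fl_opt d f D <= fl_cost d f D F.
Proof. by move=> F0; rewrite /fl_opt (bigD1 F) //= ge_min lexx. Qed.

(* Opening the single facility v serves every client of D for free. *)
Lemma fl_opt_le_f n (d : 'I_n -> 'I_n -> R) f (v : 'I_n) (D : {set 'I_n}) :
  is_metric d -> D \subset [set v] -> fl_opt d f D <= f.
Proof.
move=> [_ [d0 _]] /subsetP sDv.
have v_neq0 : [set v] != set0 by apply/set0Pn; exists v; rewrite set11.
apply: le_trans (fl_opt_le_cost d f D v_neq0) _.
rewrite /fl_cost cards1 mulr1 -[leRHS]add0r lerD2r.
apply: sumr_le0 => u /sDv; rewrite inE => /eqP ->.
by rewrite -((d0 v v).2 erefl); apply: conn_le_dist; rewrite set11.
Qed.

Section Distributions.
Variables (n : nat) (mu : {set 'I_n} -> R).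

Lemma prob_setC (O : {set {set 'I_n}}) : is_distr mu -> prob mu (~: O) = 1 - prob mu O.
Proof.
move=> [_ mu1]; rewrite /prob -mu1 [in RHS](bigID (mem O)) /= addrC addrK.
by apply: eq_bigl => F; rewrite inE.
Qed.

Lemma prob_le_expectation (g : {set 'I_n} -> R) (O : {set {set 'I_n}}) (a : R) :
  (forall F, 0 <= mu F) -> (forall F, 0 <= g F) ->
  (forall F, F \in O -> 0 < mu F -> a <= g F) ->
  a * prob mu O <= \sum_F mu F * g F.
Proof.
move=> mu_ge0 g_ge0 le_ag; rewrite /prob mulr_sumr.
apply: le_trans (_ : \sum_(F in O) mu F * g F <= _); last first.
  by rewrite [leRHS](bigID (mem O)) /= lerDl; apply: sumr_ge0 => F _; apply: mulr_ge0.
apply: ler_sum => F FO; rewrite mulrC.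
have [mu0|mu_neq0] := eqVneq (mu F) 0; first by rewrite mu0 !mul0r.
by rewrite ler_wpM2l // le_ag // lt0r mu_neq0 mu_ge0.
Qed.

Definition hits (v : 'I_n) : {set {set 'I_n}} := [set F : {set 'I_n} | v \in F].

Lemma sum_prob_hits : \sum_v prob mu (hits v) = \sum_F mu F * #|F|%:R.
Proof.
pose mem_mu v := \sum_(F : {set 'I_n}) if v \in F then mu F else 0.
rewrite /prob (eq_bigr mem_mu); last first.
  by move=> v _; rewrite big_mkcond; apply: eq_bigr => F _; rewrite inE.
rewrite exchange_big; apply: eq_bigr => F _.
by rewrite -big_mkcond sumr_const mulr_natr.
Qed.

End Distributions.

Lemma exp1_le3 : Rtrigo_def.exp 1 <= 3.
Proof. by apply/RleP; apply: Rpower.exp_le_3. Qed.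

Lemma exp1_gt0 : 0 < Rtrigo_def.exp 1.
Proof. by apply/RltP; apply: Exp_prop.exp_pos. Qed.

Lemma sqrtr_le_id (x : R) : 1 <= x -> Num.sqrt x <= x.
Proof.
move=> x_ge1; have s_ge1 : 1 <= Num.sqrt x by rewrite -sqrtr1 ler_sqrt //; lra.
have sqr_s : Num.sqrt x * Num.sqrt x = x by rewrite -expr2 sqr_sqrtr //; lra.
nra.
Qed.

Section DiscreteLowerBound.
Variables (n : nat) (M : mechanism n).
Hypotheses (n_gt0 : (0 < n)%N) (M_valid : valid_mech M) (M_dp : dp1 M).

Local Notation d := (@discrete_metric n n%:R).

Lemma discrete_is_metric : is_metric d.
Proof. by apply: discrete_metric_is_metric; rewrite ltr0n. Qed.

Lemma discrete_ge0 (x y : 'I_n) : 0 <= d x y.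
Proof. by case: discrete_is_metric => ->. Qed.

Lemma expected_cost_set0 :
  expected_cost M d 1 set0 = \sum_v prob (M d 1 set0) (hits v).
Proof.
rewrite sum_prob_hits; apply: eq_bigr => F _.
by rewrite fl_cost_set0 mul1r.
Qed.

Lemma prob_hits_set1 (v : 'I_n) :
  prob (M d 1 [set v]) (hits v) <= Rtrigo_def.exp 1 * prob (M d 1 set0) (hits v).
Proof.
apply: M_dp => //; first exact: discrete_is_metric.
by rewrite setD0 set0D setU0 cards1.
Qed.

(* A client at v whose point is not opened pays the full distance n. *)
Lemma expected_cost_set1 (v : 'I_n) :
  n%:R * (1 - prob (M d 1 [set v]) (hits v)) <= expected_cost M d 1 [set v].
Proof.
have [mu_distr mu_set0] := M_valid [set v] discrete_is_metric ltr01.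
have [mu_ge0 _] := mu_distr.
rewrite -prob_setC //; apply: prob_le_expectation => // [F|F].
  by apply: fl_cost_ge0 => //; apply: discrete_ge0.
rewrite !inE => vF mu_gt0.
have F0 : F != set0 by apply: contraTneq mu_gt0 => ->; rewrite mu_set0 ltxx.
rewrite fl_cost_set1 mul1r -[leLHS]addr0 lerD //.
apply: conn_ge => // u uF; rewrite /discrete_metric.
by case: eqP => // vu; rewrite vu uF in vF.
Qed.

Lemma expected_cost_large :
  exists (v : 'I_n) (D : {set 'I_n}),
    D \subset [set v] /\ n%:R / 6 <= expected_cost M d 1 D.
Proof.
have [[mu0_ge0 _] _] := M_valid set0 discrete_is_metric ltr01.
have p_ge0 v : 0 <= prob (M d 1 set0) (hits v) by apply: sumr_ge0.
case: (pickP (fun v => prob (M d 1 set0) (hits v) <= 1 / 6)) => [v p_le|p_gt].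
  exists v, [set v]; split=> //; apply: le_trans (expected_cost_set1 v).
  have miss_ge : 1 / 2 <= 1 - prob (M d 1 [set v]) (hits v).
    have := prob_hits_set1 v; have := exp1_le3; have := exp1_gt0.
    move: (p_ge0 v) p_le; set p := prob _ _; nra.
  have n_ge0 : (0 : R) <= n%:R by [].
  nra.
exists (Ordinal n_gt0), set0; split; first exact: sub0set.
have -> : n%:R / 6 = \sum_(v < n) (1 / 6 : R).
  by rewrite sumr_const card_ord -mulr_natr; lra.
rewrite expected_cost_set0; apply: ler_sum => v _; apply: ltW.
by move: (p_gt v) => /= /negbT; rewrite -ltNge.
Qed.

End DiscreteLowerBound.

Theorem mainTheorem5 :
  exists c : R, 0 < c /\
  forall (n : nat), (1 <= n)%N ->
  forall M : mechanism n, valid_mech M -> dp1 M ->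
  exists (d : 'I_n -> 'I_n -> R) (f : R) (D : {set 'I_n}),
    is_metric d /\ 0 < f /\
    c * Num.sqrt (n%:R) * fl_opt d f D <= expected_cost M d f D.
Proof.
exists (1 / 6); split; first lra.
move=> n n_gt0 M M_valid M_dp.
have [v [D [sDv cost_ge]]] := expected_cost_large n_gt0 M_valid M_dp.
exists (@discrete_metric n n%:R), 1, D; split; first exact: discrete_is_metric.
split; first exact: ltr01.
have opt_le1 := fl_opt_le_f 1 (discrete_is_metric n_gt0) sDv.
have sqrt_le_n : Num.sqrt n%:R <= n%:R :> R by apply: sqrtr_le_id; rewrite ler1n.
rewrite -mulrA div1r mulrC; apply: le_trans cost_ge.
apply: ler_wpM2r; first by rewrite invr_ge0.
apply: le_trans sqrt_le_n; rewrite -[leRHS]mulr1.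
by rewrite ler_wpM2l ?sqrtr_ge0.
Qed.
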